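(* Let $A$ be a Boolean algebra (an associative ring with unity satisfying $x^2=x$ for all $x$), and let $X\subseteq A$ be a subset closed under $x\mapsto 1-x$ and with $0\in X$. Then for all $n\ge 0$: 1) $\mathcal{R}^n(X)\subseteq\mathcal{D}^{2n}(X)$, and 2) $\mathcal{D}^n(X)\subseteq\mathcal{V}_{2^{2^n}}(\mathcal{I}_{2^n}(X))$.
   Context: For $Y\subseteq A$: $\mathcal{R}(Y)=Y\cup\{-1,0,1\}\cup\{x+y: x,y\in Y\}\cup\{xy: x,y\in Y\}$; $\mathcal{D}(Y)=Y\cup\{0,1\}\cup\{x+y : x,y\in Y,\ xy=0\}\cup\{xy: x,y\in Y\}$; $\mathcal{I}_k(Y)=\{x_1x_2\cdots x_k : x_1,\dots,x_k\in Y\}$; $\mathcal{V}_k(Y)=\{x_1+\dots+x_k : x_1,\dots,x_k\in Y,\ x_ix_j=0 \text{ for all } i\neq j\}$. Powers $\mathcal{R}^n,\mathcal{D}^n$ denote $n$-fold iteration (with $\mathcal{R}^0(Y)=\mathcal{D}^0(Y)=Y$). *)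

From HB Require Import structures.
From mathcomp Require Import all_boot all_order all_algebra.
Set Implicit Arguments. Unset Strict Implicit. Unset Printing Implicit Defensive.
Import GRing.Theory.
Local Open Scope ring_scope.

Definition Rop (A : pzRingType) (Y : A -> Prop) : A -> Prop :=
  fun z => Y z \/ z = -1 \/ z = 0 \/ z = 1
        \/ (exists x y, Y x /\ Y y /\ z = x + y)
        \/ (exists x y, Y x /\ Y y /\ z = x * y).

Definition Dop (A : pzRingType) (Y : A -> Prop) : A -> Prop :=
  fun z => Y z \/ z = 0 \/ z = 1
        \/ (exists x y, Y x /\ Y y /\ x * y = 0 /\ z = x + y)
        \/ (exists x y, Y x /\ Y y /\ z = x * y).

Definition Iop (A : pzRingType) (k : nat) (Y : A -> Prop) : A -> Prop :=
  fun z => exists f : 'I_k -> A, (forall i, Y (f i)) /\ z = \prod_(i < k) f i.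

Definition Vop (A : pzRingType) (k : nat) (Y : A -> Prop) : A -> Prop :=
  fun z => exists f : 'I_k -> A, (forall i, Y (f i)) /\
             (forall i j, i != j -> f i * f j = 0) /\ z = \sum_(i < k) f i.

(** In a Boolean ring multiplication is commutative and [x + x = 0], so
    [x + y = x(1 - y) + (1 - x)y] and [1 - (x + y) = xy + (1 - x)(1 - y)] are
    sums of two orthogonal products, and [1 - xy = (1 - x) + x(1 - y)] is one as
    well.  Hence one ring step applied to a set containing the complements of its
    elements is simulated by two disjoint-sum/product steps, provided complements
    are carried along in the induction.  For the second part, a disjoint sum
    [\sum_i f_i] of pairwise orthogonal idempotents absorbs each summand
    ([f_i \sum_j f_j = f_i]), so two such sums [x, y] with [xy = 0] have pairwise
    orthogonal summands altogether, and the product of two such sums is again one,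
    indexed by pairs.  Each [D]-step thus at most squares the number of summands
    and doubles the length of the products, after padding with [0 = 0^k] and
    [1 = 1^k]. *)
From HB Require Import structures.
From mathcomp Require Import all_boot all_order all_algebra.
From mathcomp Require Import zify.
Set Implicit Arguments.
Unset Strict Implicit.
Unset Printing Implicit Defensive.
Import GRing.Theory.
Local Open Scope ring_scope.

Section Families.
Variable A : pzRingType.
Implicit Types (X Y Z : A -> Prop).

Lemma VopP (I : finType) m Y (f : I -> A) : #|I| = m ->
  (forall i, Y (f i)) -> (forall i j, i != j -> f i * f j = 0) ->
  Vop m Y (\sum_i f i).
Proof.
move=> <- Yf orth_f; exists (fun k => f (enum_val k)); split => //; split.
  by move=> k l kl; apply: orth_f; apply: contra kl => /eqP/enum_val_inj ->.
by rewrite -big_enum_val.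
Qed.

Lemma Vop_sub m Y Z z : (forall y, Y y -> Z y) -> Vop m Y z -> Vop m Z z.
Proof. by move=> YZ [f [Yf [orth_f ->]]]; exists f; split => // i; apply: YZ. Qed.

Lemma Vop_empty Y : Vop 0%N Y 0.
Proof. by exists (fun _ => 0); split; [case|split; [case|rewrite big_ord0]]. Qed.

Lemma Vop_single Y z : Y z -> Vop 1%N Y z.
Proof.
by exists (fun _ => z); split=> //; split=> [i j|]; rewrite ?big_ord1 // !ord1 eqxx.
Qed.

Lemma Vop_widen m m' Y z : Y 0 -> (m <= m')%N -> Vop m Y z -> Vop m' Y z.
Proof.
move=> Y0 le_mm' [f [Yf [orth_f ->]]].
pose g (s : 'I_m + 'I_(m' - m)) := if s is inl i then f i else 0.
have -> : \sum_(i < m) f i = \sum_s g s.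
  by rewrite big_sumType /= big1_eq addr0.
apply: (VopP (f := g)); first by rewrite card_sum !card_ord; lia.
  by case.
case=> [i|i] [j|j] //= ij; rewrite ?mulr0 ?mul0r //; apply: orth_f.
by apply: contra ij => /eqP ->.
Qed.

Lemma Iop_single X z : X z -> Iop 1%N X z.
Proof. by move=> Xz; exists (fun _ => z); rewrite big_ord1. Qed.

Lemma Iop_mul X k k' a b : Iop k X a -> Iop k' X b -> Iop (k + k')%N X (a * b).
Proof.
move=> [f [Xf ->]] [g [Xg ->]].
exists (fun i => match split i with inl j => f j | inr j => g j end); split.
  by move=> i; case: (split i).
rewrite big_split_ord; congr (_ * _); apply: eq_bigr => i _.
  by rewrite (unsplitK (inl i)).
by rewrite (unsplitK (inr i)).
Qed.

Lemma Iop_one X k : X 1 -> Iop k X 1.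
Proof. by exists (fun _ => 1); rewrite big1. Qed.

Lemma Iop_zero X k : X 0 -> (0 < k)%N -> Iop k X 0.
Proof.
by case: k => // k X0 _; exists (fun _ => 0); rewrite big_ord_recl mul0r.
Qed.

Lemma Iop_widen X k k' z : X 1 -> Iop k X z -> Iop (k + k')%N X z.
Proof. by move=> X1 Xz; rewrite -[z]mulr1; apply: Iop_mul => //; apply: Iop_one. Qed.

Lemma compl_mulr (x y : A) : 1 - x * y = (1 - x) + x * (1 - y).
Proof. by rewrite mulrBr mulr1 addrA subrK. Qed.

End Families.

Section BooleanRing.
Variable A : pzRingType.
Hypothesis mulrr : forall x : A, x * x = x.
Implicit Types (Y Z : A -> Prop).

Lemma addrr_idem (x : A) : x + x = 0.
Proof.
have := mulrr (x + x); rewrite mulrDl !mulrDr !mulrr => xx.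
by apply: (addrI (x + x)); rewrite addr0.
Qed.

Lemma oppr_idem (x : A) : - x = x.
Proof. by apply: (addrI x); rewrite subrr addrr_idem. Qed.

Lemma mulrC_idem (x y : A) : x * y = y * x.
Proof.
have := mulrr (x + y); rewrite mulrDl !mulrDr !mulrr => xy.
have : x * y + y * x = 0.
  by apply: (addrI (x + y)); rewrite addr0 -[in RHS]xy addrACA [y * x + y]addrC.
by move/eqP; rewrite addr_eq0 oppr_idem => /eqP.
Qed.

Lemma mulrACA_idem (a b c d : A) : a * b * (c * d) = a * c * (b * d).
Proof. by rewrite -!mulrA (mulrA b) (mulrC_idem b c) -mulrA. Qed.

Lemma mulr_compl (x : A) : x * (1 - x) = 0.
Proof. by rewrite mulrBr mulr1 mulrr subrr. Qed.

Lemma mulr_complL (x : A) : (1 - x) * x = 0.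
Proof. by rewrite mulrBl mul1r mulrr subrr. Qed.

Lemma addr_disjoint (x y : A) : x + y = x * (1 - y) + (1 - x) * y.
Proof.
by rewrite mulrBr mulr1 mulrBl mul1r addrACA -opprD addrr_idem subr0.
Qed.

Lemma compl_addr (x y : A) : 1 - (x + y) = x * y + (1 - x) * (1 - y).
Proof.
rewrite mulrBl mul1r mulrBr mulr1 opprB addrCA [x * y + (x * y - x)]addrA.
by rewrite addrr_idem add0r opprD addrA addrAC.
Qed.

Lemma Rop_sub_Dop2 Y Z : (forall y, Y y -> Z y /\ Z (1 - y)) ->
  forall z, Rop Y z -> Dop (Dop Z) z /\ Dop (Dop Z) (1 - z).
Proof.
move=> YZ z.
have DDZ y : Z y -> Dop (Dop Z) y by left; left.
have DZ_mul a b : Z a -> Z b -> Dop Z (a * b) by do 4 right; exists a, b.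
have DDZ_add a b : Dop Z a -> Dop Z b -> a * b = 0 -> Dop (Dop Z) (a + b).
  by right; right; right; left; exists a, b.
have DD0 : Dop (Dop Z) 0 by right; left.
have DD1 : Dop (Dop Z) 1 by right; right; left.
case=> [/YZ[]|[->|[->|[->|[[x [y [/YZ[Zx Zx'] [/YZ[Zy Zy'] ->]]]]|
  [x [y [/YZ[Zx Zx'] [/YZ[Zy Zy'] ->]]]]]]]]].
- by split; apply: DDZ.
- by rewrite oppr_idem subrr.
- by rewrite subr0.
- by rewrite subrr.
- have compl_orth (a b c : A) : a * b * ((1 - a) * c) = 0.
    by rewrite mulrACA_idem mulr_compl mul0r.
  rewrite compl_addr {1}addr_disjoint.
  by split; apply: DDZ_add; rewrite ?compl_orth //; apply: DZ_mul.
- split; first by left; apply: DZ_mul.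
  rewrite compl_mulr; apply: DDZ_add; [by left|exact: DZ_mul|].
  by rewrite mulrA mulr_complL mul0r.
Qed.

Lemma mulr_sum_orth m (f : 'I_m -> A) i :
  (forall i j, i != j -> f i * f j = 0) -> f i * \sum_j f j = f i.
Proof.
move=> orth_f; rewrite mulr_sumr (bigD1 i) //= mulrr big1 ?addr0 // => j ji.
by apply: orth_f; rewrite eq_sym.
Qed.

Lemma Vop_add m m' Y x y :
  Vop m Y x -> Vop m' Y y -> x * y = 0 -> Vop (m + m')%N Y (x + y).
Proof.
move=> [f [Yf [orth_f ->]]] [g [Yg [orth_g ->]]] xy.
have cross i j : f i * g j = 0.
  rewrite -(mulr_sum_orth i orth_f) -(mulr_sum_orth j orth_g) (mulrC_idem (g j)).
  by rewrite mulrA -(mulrA (f i)) xy mulr0 mul0r.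
pose h (s : 'I_m + 'I_m') := match s with inl i => f i | inr j => g j end.
have -> : \sum_(i < m) f i + \sum_(j < m') g j = \sum_s h s by rewrite big_sumType.
apply: (VopP (f := h)); first by rewrite card_sum !card_ord.
  by case.
case=> [i|i] [j|j]; rewrite /h => ij.
- by apply: orth_f; apply: contra ij => /eqP ->.
- exact: cross.
- by rewrite mulrC_idem cross.
- by apply: orth_g; apply: contra ij => /eqP ->.
Qed.

Lemma Vop_mul m m' Y Y' Z x y : (forall a b, Y a -> Y' b -> Z (a * b)) ->
  Vop m Y x -> Vop m' Y' y -> Vop (m * m')%N Z (x * y).
Proof.
move=> YZ [f [Yf [orth_f ->]]] [g [Yg [orth_g ->]]].
rewrite big_distrlr pair_bigA /=.
apply: (VopP (f := fun p : 'I_m * 'I_m' => f p.1 * g p.2)).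
- by rewrite card_prod !card_ord.
- by move=> [i j]; apply: YZ.
move=> [i j] [k l] /=; rewrite mulrACA_idem.
have [-> ne | ik _] := eqVneq i k; last by rewrite orth_f // mul0r.
by rewrite orth_g ?mulr0 //; apply: contra ne => /eqP ->.
Qed.

End BooleanRing.

Section Closure.
Variables (A : pzRingType) (X : A -> Prop).
Hypothesis mulrr : forall x : A, x * x = x.
Hypothesis X0 : X 0.
Hypothesis X_compl : forall x, X x -> X (1 - x).

Lemma iter_Rop_sub_Dop n z : iter n (@Rop A) X z ->
  iter (2 * n)%N (@Dop A) X z /\ iter (2 * n)%N (@Dop A) X (1 - z).
Proof.
elim: n z => [|n IHn] z; first by split; last apply: X_compl.
by rewrite mulnS iterD; apply: (Rop_sub_Dop2 mulrr).
Qed.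

Lemma Dop_sub_Vop N M Y : (0 < N)%N -> (2 <= M)%N ->
  (forall y, Y y -> Vop M (Iop N X) y) ->
  forall z, Dop Y z -> Vop (M * M)%N (Iop (N + N)%N X) z.
Proof.
move=> N_gt0 M_ge2 YV z.
have X1 : X 1 by rewrite -(subr0 1); apply: X_compl.
have widen m w : (m <= M * M)%N ->
    Vop m (Iop (N + N)%N X) w -> Vop (M * M)%N (Iop (N + N)%N X) w.
  by apply: Vop_widen; apply: Iop_zero => //; rewrite addn_gt0 N_gt0.
have lift w : Y w -> Vop M (Iop (N + N)%N X) w.
  by move/YV; apply: Vop_sub => y; apply: Iop_widen X1.
case=> [Yz|[->|[->|[[x [y [Yx [Yy [xy ->]]]]]|[x [y [Yx [Yy ->]]]]]]]].
- by apply: (widen M); [nia|apply: lift].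
- by apply: (widen 0%N); [|apply: Vop_empty].
- by apply: (widen 1%N); [nia|apply/Vop_single/Iop_one].
- apply: (widen (M + M)%N); first nia.
  exact (Vop_add mulrr (lift _ Yx) (lift _ Yy) xy).
exact (Vop_mul mulrr (@Iop_mul _ X N N) (YV _ Yx) (YV _ Yy)).
Qed.

Lemma iter_Dop_sub_Vop n z :
  iter n (@Dop A) X z -> Vop (2 ^ 2 ^ n)%N (Iop (2 ^ n)%N X) z.
Proof.
elim: n z => [|n IHn] z.
  by move=> Xz; apply: (Vop_widen (m := 1%N)) => //; [apply: Iop_zero|apply/Vop_single/Iop_single].
rewrite (expnS 2 n) mul2n -addnn expnD.
apply: (Dop_sub_Vop _ _ IHn); first by rewrite expn_gt0.
by rewrite -{1}(expn1 2) leq_exp2l // expn_gt0.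
Qed.

End Closure.

Theorem mainTheorem7 (A : pzRingType) (hbool : forall x : A, x * x = x)
  (X : A -> Prop) (hX1 : forall x, X x -> X (1 - x)) (hX0 : X 0) :
  forall n : nat,
    (forall z, iter n (@Rop A) X z -> iter (2 * n) (@Dop A) X z) /\
    (forall z, iter n (@Dop A) X z ->
               Vop (2 ^ (2 ^ n)) (Iop (2 ^ n) X) z).
Proof.
move=> n; split=> z Hz; first by case: (iter_Rop_sub_Dop hbool hX1 Hz).
exact: iter_Dop_sub_Vop hbool hX0 hX1 n z Hz.
Qed.
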